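(* For $n\ge 1$ let $a_n$ be the number of words $w=w_1\cdots w_n$ over $\{1,2,3\}$ such that there is no $i$ with $w_{i+1}=w_i+1$ and no $i$ with $w_{i+2}=w_i+2$ (i.e. $w$ simultaneously avoids the place-difference-value patterns $(12,(\mathbb{P},\{1\},\mathbb{P}),\{(1,2,\{1\})\},(\mathbb{P},\mathbb{P}))$ and $(12,(\mathbb{P},\{2\},\mathbb{P}),\{(1,2,\{2\})\},(\mathbb{P},\mathbb{P}))$). Then $a_1=3$, $a_2=7$, $a_n=a_{n-1}+a_{n-2}+n+1$ for $n\ge 3$, and consequently $a_n=F_{n+5}-n-4$ for all $n\ge1$, where $F_1=F_2=1$ and $F_m=F_{m-1}+F_{m-2}$. *)

From mathcomp Require Import all_boot.
Set Implicit Arguments. Unset Strict Implicit. Unset Printing Implicit Defensive.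

(* Letters {1,2,3} are encoded as 'I_3 = {0,1,2} (letter k+1 <-> k);
   differences w_{i+1}-w_i are shift-invariant so this is harmless. *)

Definition avoids_both (n : nat) (w : n.-tuple 'I_3) : bool :=
  [forall i : 'I_n,
     ((i.+1 < n) ==> (nth 0 (map val w) i.+1 != (nth 0 (map val w) i).+1)) &&
     ((i.+2 < n) ==> (nth 0 (map val w) i.+2 != (nth 0 (map val w) i).+2))].

Definition a (n : nat) : nat := #|[set w : n.-tuple 'I_3 | avoids_both w]|.

Fixpoint fib (m : nat) : nat :=
  match m with
  | 0 => 0
  | 1 => 1
  | (k.+1 as k1).+1 => fib k1 + fib k
  end.

From mathcomp Require Import all_boot zify.

(* Transfer matrix on the last two letters.  Let [ext_count n x y] count the
   length-n words [s] such that [x y s] is good.  A good word of length n+2 is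
   a good pair [x y] followed by such an [s], and [ext_count (n+1) x y] is a
   sum of [ext_count n y z] over the letters [z] allowed after [x y].  Each of
   the nine states evolves by a Fibonacci-type recurrence (state (2,2) with an
   extra +1 per step), which gives [a n + n + 4 = F (n+5)]; the recurrence for
   [a n] is read off from this closed form. *)

Lemma card_set_count (T : finType) (P : pred T) :
  #|[set x | P x]| = count P (enum T).
Proof. by rewrite cardsE cardE -size_filter enumT /enum_mem. Qed.

Definition good_at (s : seq nat) (i : nat) : bool :=
  ((i.+1 < size s) ==> (nth 0 s i.+1 != (nth 0 s i).+1)) &&
  ((i.+2 < size s) ==> (nth 0 s i.+2 != (nth 0 s i).+2)).

Fixpoint good (s : seq nat) : bool :=
  if s is _ :: s' then good_at s 0 && good s' else true.

Lemma goodE s : good s = all (good_at s) (iota 0 (size s)).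
Proof.
elim: s => [//|x s IH] /=; congr (_ && _).
rewrite IH -(addn0 1) iotaDl all_map; apply: eq_all => i /=.
by rewrite /good_at /= !ltnS.
Qed.

Lemma avoids_bothE n (w : n.-tuple 'I_3) : avoids_both w = good (map val w).
Proof.
rewrite goodE /good_at size_map size_tuple /avoids_both.
apply/forallP/allP => [Hw i | Hw i].
  by rewrite mem_iota add0n => /= lt_in; apply: (Hw (Ordinal lt_in)).
by apply: Hw; rewrite mem_iota /=.
Qed.

Fixpoint words (n : nat) : seq (seq nat) :=
  if n is n'.+1 then [seq x :: s | x <- iota 0 3, s <- words n'] else [:: [::]].

Lemma uniq_words n : uniq (words n).
Proof.
elim: n => [//|n IH]; apply: allpairs_uniq => //.
by move=> [x s] [y t] _ _ /= [-> ->].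
Qed.

Lemma mem_words n s : (s \in words n) = (size s == n) && all (fun x => x < 3) s.
Proof.
elim: n s => [|n IH] s; first by case: s.
apply/allpairsP/idP => [[[x t] [/= x3 t_n ->]] | ].
  move: t_n; rewrite IH /= eqSS => /andP[-> ->].
  by move: x3; rewrite !inE => /or3P[]/eqP->.
case: s => [//|x s] /= /andP[s_n /andP[x3 s3]].
exists (x, s); split => //=; first by rewrite !inE; move: x3; case: x => [|[|[]]].
by change (s \in words n); rewrite IH -eqSS s_n.
Qed.

Lemma words_tuples n : perm_eq [seq map val w | w : n.-tuple 'I_3] (words n).
Proof.
apply: uniq_perm; last 1 first.
- move=> s; rewrite mem_words; apply/mapP/idP => [[w _ ->] | /andP[/eqP s_n s3]].
    rewrite size_map size_tuple eqxx /=.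
    by apply/allP => _ /mapP[y _ ->]; apply: ltn_ord.
  have size_s : size (map (inord : nat -> 'I_3) s) == n by rewrite size_map s_n.
  exists (Tuple size_s); first by rewrite mem_enum.
  rewrite /= -map_comp -[LHS]map_id; apply/eq_in_map => x x_s /=.
  by rewrite inordK //; apply: (allP s3).
- rewrite map_inj_uniq ?enum_uniq // => u v /= /(inj_map val_inj).
  exact: val_inj.
- exact: uniq_words.
Qed.

Lemma a_count_words n : a n = count good (words n).
Proof.
rewrite /a card_set_count (eq_count (@avoids_bothE n)).
by rewrite -(count_map _ good); apply/permP/words_tuples.
Qed.

Lemma count_words_cons n (P : pred (seq nat)) :
  count P (words n.+1) = count (fun s => P (0 :: s)) (words n)
    + count (fun s => P (1 :: s)) (words n) + count (fun s => P (2 :: s)) (words n).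
Proof. by rewrite /= !count_cat !count_map addn0 addnA. Qed.

Lemma count_andbl (T : Type) (b : bool) (P : pred T) s :
  count (fun x => b && P x) s = b * count P s.
Proof. by case: b; rewrite ?mul1n ?mul0n ?count_pred0. Qed.

Lemma good_cons3 x y z s :
  good [:: x, y, z & s] = [&& y != x.+1, z != x.+2 & good [:: y, z & s]].
Proof. by rewrite [LHS]/= {1}/good_at /= -andbA. Qed.

Definition ext_count (n x y : nat) : nat :=
  count (fun s => good [:: x, y & s]) (words n).

Lemma ext_count0 x y : ext_count 0 x y = (y != x.+1).
Proof. by rewrite /ext_count /= /good_at /= !andbT addn0. Qed.

Lemma ext_countS n x y : ext_count n.+1 x y = (y != x.+1) *
  ((0 != x.+2) * ext_count n y 0 + (1 != x.+2) * ext_count n y 1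
    + (2 != x.+2) * ext_count n y 2).
Proof.
by rewrite {1}/ext_count count_words_cons !(eq_count (good_cons3 x y _))
  !count_andbl !mulnDr.
Qed.

Lemma a_ext_count n : a n.+2 = \sum_(x < 3) \sum_(y < 3) ext_count n x y.
Proof. by rewrite a_count_words !count_words_cons !big_ord_recr !big_ord0. Qed.

Lemma fibSS m : fib m.+2 = fib m.+1 + fib m.
Proof. by []. Qed.

(* Keep [fib] folded so that [lia] treats its values as atoms. *)
Arguments fib : simpl never.

Lemma ext_count_closed n :
  [/\ ext_count n 0 0 = 1 /\ ext_count n 0 1 = 0, ext_count n 1 2 = 0,
      ext_count n 1 0 = fib n.+2 /\ ext_count n 2 0 = fib n.+2,
      [/\ ext_count n 0 2 + 1 = fib n.+3, ext_count n 1 1 + 1 = fib n.+3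
        & ext_count n 2 1 + 1 = fib n.+3]
    & ext_count n 2 2 + n + 4 = fib n.+4.+1].
Proof.
elim: n => [|n [[e00 e01] e12 [e10 e20] [e02 e11 e21] e22]].
  by rewrite !ext_count0.
rewrite !ext_countS /=.
have := fibSS n.+1; have := fibSS n.+2; have := fibSS n.+3; have := fibSS n.+4.
by repeat split; lia.
Qed.

Lemma a_closed n : a n.+1 + n + 5 = fib n.+4.+2.
Proof.
case: n => [|n]; first by rewrite a_count_words.
rewrite a_ext_count /= !big_ord_recr !big_ord0 /=.
have [[e00 e01] e12 [e10 e20] [e02 e11 e21] e22] := ext_count_closed n.
have := fibSS n.+2; have := fibSS n.+3; have := fibSS n.+4; have := fibSS n.+4.+1.
lia.
Qed.

Theorem mainTheorem10 :
  a 1 = 3 /\ a 2 = 7 /\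
  (forall n : nat, 3 <= n -> a n = a n.-1 + a n.-2 + n + 1) /\
  (forall n : nat, 1 <= n -> a n + n + 4 = fib (n + 5)).
Proof.
have closed n : 1 <= n -> a n + n + 4 = fib (n + 5).
  case: n => [//|n] _; have -> : n.+1 + 5 = n.+4.+2 by lia.
  by have := a_closed n; lia.
split; first by rewrite a_count_words.
split; first by rewrite a_count_words.
split=> // -[|[|[|m]]] // _ /=.
have := a_closed m.+2; have := a_closed m.+1; have := a_closed m.
have := fibSS m.+4.+2.
lia.
Qed.
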